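(* Let $\Lambda=KQ/\langle I\rangle$ be a $1$-Gorenstein gentle algebra over an algebraically closed field $K$, let $\Gamma=KQ^{Aus}/\langle I^{Aus}\rangle$ be its Cohen–Macaulay Auslander algebra and $\Phi$ the functor described in the context. Let $N=((N_i)_{i\in Q_0},(N_\alpha)_{\alpha\in Q_1})$ be a Gorenstein projective $\Lambda$-module, so that $\widehat{N}=\Phi(N)$ has underlying space $\bigoplus_{i\in Q_0}\widehat{N}_i\oplus\bigoplus_{\alpha\in Q_1^{cyc}}\widehat{N}_\alpha$. Then: (i) for every $i\in Q_0$, $\dim\widehat{N}_i=\dim N_i=\dim\mathrm{Hom}_\Lambda(P_i,N)$, where $P_i=\Lambda e_i$ is the indecomposable projective $\Lambda$-module at $i$; (ii) for every $\alpha\in Q_1^{cyc}$, $\dim\widehat{N}_\alpha=\dim\mathrm{Hom}_\Lambda(P_{s(\alpha)},N)-\dim\mathrm{Hom}_\Lambda(R(\beta),N)$, where $\beta$ is the arrow satisfying $\alpha\beta\in I$ and $R(\beta)=\Lambda\beta$.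
   Context: Conventions: arrows $\alpha:s(\alpha)\to t(\alpha)$; paths composed right to left ($\alpha\beta$ means $\beta$ then $\alpha$, so $t(\beta)=s(\alpha)$). A gentle algebra is a finite dimensional $\Lambda=KQ/\langle I\rangle$ where $I$ is a set of length-$2$ paths such that: each vertex is the start of at most two and the end of at most two arrows; for each arrow $\alpha$ there is at most one arrow $\beta$ with $t(\beta)=s(\alpha)$, $\alpha\beta\notin I$, at most one $\gamma$ with $s(\gamma)=t(\alpha)$, $\gamma\alpha\notin I$, at most one $\beta$ with $t(\beta)=s(\alpha)$, $\alpha\beta\in I$, and at most one $\gamma$ with $s(\gamma)=t(\alpha)$, $\gamma\alpha\in I$. $\Lambda$ is $1$-Gorenstein if its injective dimension as a left and as a right module is at most $1$. Modules are finite dimensional left modules (representations of $(Q,I)$). A $\Lambda$-module $G$ is Gorenstein projective if there is an exact complex $\cdots\to P^{-1}\to P^0\xrightarrow{d^0}P^1\to\cdots$ of projective $\Lambda$-modules which remains exact under $\mathrm{Hom}_\Lambda(-,\Lambda)$ and with $G\cong\mathrm{Ker}\,d^0$. $\mathcal{C}(\Lambda)$ is the set of repetition-free cyclic paths $\alpha_1\cdots\alpha_n$ (up to cyclic permutation) with $\alpha_i\alpha_{i+1}\in I$ for all $i$ (indices mod $n$); $Q_1^{cyc}$ is the set of arrows on such cycles, $Q_1^{ncyc}=Q_1\setminus Q_1^{cyc}$. For each arrow $\gamma$, $R(\gamma)$ denotes the left ideal $\Lambda\gamma$. $Q^{Aus}$ has vertices $Q_0\sqcup Q_1^{cyc}$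 and arrows $Q_1^{ncyc}\sqcup\{\alpha^+:s(\alpha)\to\alpha\}_{\alpha\in Q_1^{cyc}}\sqcup\{\alpha^-:\alpha\to t(\alpha)\}_{\alpha\in Q_1^{cyc}}$; $I^{Aus}=\{\beta^+\alpha^-\mid\beta\alpha\in I,\ \alpha,\beta\in Q_1^{cyc}\}\cup\{\beta\alpha\mid\beta\alpha\in I,\ \alpha,\beta\in Q_1^{ncyc}\}$; $\Gamma=KQ^{Aus}/\langle I^{Aus}\rangle$. $\Phi(M)=\widehat{M}$ has $\widehat{M}_i=M_i$ ($i\in Q_0$), $\widehat{M}_\alpha=\mathrm{Im}\,M_\alpha$ ($\alpha\in Q_1^{cyc}$), $\widehat{M}_\beta=M_\beta$ ($\beta\in Q_1^{ncyc}$), and $\widehat{M}_{\alpha^+}$, $\widehat{M}_{\alpha^-}$ the surjection $M_{s(\alpha)}\to\mathrm{Im}\,M_\alpha$ and inclusion $\mathrm{Im}\,M_\alpha\to M_{t(\alpha)}$ factoring $M_\alpha$. *)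

From HB Require Import structures.
From mathcomp Require Import all_boot all_order all_algebra.
Set Implicit Arguments. Unset Strict Implicit. Unset Printing Implicit Defensive.
Import Order.TTheory GRing.Theory Num.Theory.

(* [qrel x y] means that the length-2 path  x y  (i.e. y then x, so     *)
(* tgt y = src x) belongs to I (paths are composed right to left).     *)
Record bquiver := BQuiver {
  Q0 : finType;
  Q1 : finType;
  src : Q1 -> Q0;
  tgt : Q1 -> Q0;
  qrel : Q1 -> Q1 -> bool }.

(* opposite bound quiver: right modules over KQ/<I> are left modules over it *)
Definition opQ (Q : bquiver) : bquiver :=
  @BQuiver (Q0 Q) (Q1 Q) (@tgt Q) (@src Q) (fun x y => qrel y x).

Section Paths.
Variable Q : bquiver.

(* A path is a start vertex together with the list of its arrows in the
   order of traversal ([:: a1; a2; ...; ak] means a1 first).            *)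
Definition qpath := (Q0 Q * seq (Q1 Q))%type.

Definition nzstep (x y : Q1 Q) := (tgt x == src y) && ~~ qrel y x.

(* composable path not containing any relation of I, i.e. a nonzero path
   (a basis element) of the monomial algebra KQ/<I> *)
Definition nzpath (p : qpath) : bool :=
  if p.2 is a :: w then (src a == p.1) && path nzstep a w else true.

Definition pend (p : qpath) : Q0 Q := last p.1 [seq tgt a | a <- p.2].

Fixpoint words (k : nat) : seq (seq (Q1 Q)) :=
  if k is k'.+1 then [seq a :: w | a <- enum (Q1 Q), w <- words k'] else [:: [::]].

Definition plist (L : nat) : seq qpath :=
  [seq p <- [seq (i, w) | i <- enum (Q0 Q), w <- flatten [seq words k | k <- iota 0 L]]
   | nzpath p].

(* (KQ/<I>) is finite dimensional, witnessed by L: every path of length L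
   contains a relation (hence is zero), so the nonzero paths of length < L
   form a basis of the algebra. *)
Definition fd_bound (L : nat) : Prop :=
  forall p : qpath, size p.2 = L -> ~~ nzpath p.

Definition gentle (L : nat) : Prop :=
  [/\ forall x y : Q1 Q, qrel x y -> tgt y = src x,
      forall v : Q0 Q, #|[pred a | src a == v]| <= 2 /\ #|[pred a | tgt a == v]| <= 2,
      forall a : Q1 Q,
        [/\ #|[pred b | (tgt b == src a) && ~~ qrel a b]| <= 1,
            #|[pred g | (src g == tgt a) && ~~ qrel g a]| <= 1,
            #|[pred b | qrel a b]| <= 1 &
            #|[pred g | qrel g a]| <= 1]
    & fd_bound L].

(* arrows lying on a repetition-free cyclic path a1 ... an with
   a_i a_(i+1) in I for all i (indices mod n): the set Q1^cyc *)
Definition cyc_arrow (a : Q1 Q) : Prop :=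
  exists c : seq (Q1 Q),
    [/\ uniq c, a \in c &
        forall k, k < size c ->
          qrel (nth a c k) (nth a c (k.+1 %% size c))].
End Paths.

(* Modules.  A finite dimensional left KQ/<I>-module is a space K^n     *)
(* (column vectors) with matrices e_i (action of the trivial paths) and *)
(* a_alpha (action of the arrows), satisfying the defining relations of *)
(* the algebra.  The vertex space M_i is the image of e_i, and the map  *)
(* M_alpha : M_(s alpha) -> M_(t alpha) is the restriction of a_alpha.  *)
Section Modules.
Local Open Scope ring_scope.
Variable K : fieldType.
Variable Q : bquiver.

Record qmod := QMod {
  mdim : nat;
  me : Q0 Q -> 'M[K]_mdim;
  ma : Q1 Q -> 'M[K]_mdim }.

Definition is_mod (M : qmod) : Prop :=
  [/\ forall i j, me M i *m me M j = (if i == j then me M i else 0),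
      \sum_(i : Q0 Q) me M i = 1%:M,
      forall a, ma M a = me M (tgt a) *m ma M a *m me M (src a) &
      forall x y, qrel x y -> ma M x *m ma M y = 0].

Definition is_hom (M N : qmod) (F : 'M[K]_(mdim N, mdim M)) : Prop :=
  (forall i, F *m me M i = me N i *m F) /\ (forall a, F *m ma M a = ma N a *m F).

Definition inj_map m n (F : 'M[K]_(n, m)) : Prop :=
  forall x : 'cV[K]_m, F *m x = 0 -> x = 0.
Definition surj_map m n (F : 'M[K]_(n, m)) : Prop :=
  forall y : 'cV[K]_n, exists x, y = F *m x.
Definition exact_at m n p (f : 'M[K]_(n, m)) (g : 'M[K]_(p, n)) : Prop :=
  forall y : 'cV[K]_n, g *m y = 0 <-> exists x, y = f *m x.

(* The K-space Hom(M,N), encoded (via mxvec) as a row space, and its dimension *)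
Definition homspace (M N : qmod) : 'M[K]_(mdim N * mdim M) :=
  ((\bigcap_(i : Q0 Q) kermx (lin_mx (fun F : 'M[K]_(mdim N, mdim M) =>
                                 F *m me M i - me N i *m F)))
   :&: (\bigcap_(a : Q1 Q) kermx (lin_mx (fun F : 'M[K]_(mdim N, mdim M) =>
                                 F *m ma M a - ma N a *m F))))%MS.
Definition homdim (M N : qmod) : nat := \rank (homspace M N).

Definition projective (P : qmod) : Prop :=
  forall (M M' : qmod) (f : 'M[K]_(mdim M', mdim M)) (g : 'M[K]_(mdim M', mdim P)),
    is_mod M -> is_mod M' -> is_hom f -> surj_map f -> is_hom g ->
    exists h : 'M[K]_(mdim M, mdim P), is_hom h /\ f *m h = g.

Definition injective (E : qmod) : Prop :=
  forall (M M' : qmod) (f : 'M[K]_(mdim M', mdim M)) (g : 'M[K]_(mdim E, mdim M)),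
    is_mod M -> is_mod M' -> is_hom f -> inj_map f -> is_hom g ->
    exists h : 'M[K]_(mdim E, mdim M'), is_hom h /\ h *m f = g.

Definition injdim_le1 (X : qmod) : Prop :=
  exists (E0 E1 : qmod) (i : 'M[K]_(mdim E0, mdim X)) (p : 'M[K]_(mdim E1, mdim E0)),
    [/\ is_mod E0 /\ is_mod E1, injective E0 /\ injective E1,
        is_hom i /\ is_hom p, inj_map i /\ surj_map p & exact_at i p].

(* The module spanned by the nonzero paths (of length < L) satisfying P,
   with left action by composition (a . p = p followed by a).
   For P closed under left multiplication this is the left ideal of KQ/<I>
   spanned by those paths. *)
Section PathModule.
Variables (L : nat) (P : pred (qpath Q)).
Let B := [seq p <- plist Q L | P p].
Definition pathmod : qmod :=
  @QMod (size B)
    (fun i => \matrix_(r, c) ((r == c) && (pend (tnth (in_tuple B) c) == i))%:R)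
    (fun a => \matrix_(r, c)
       (tnth (in_tuple B) r == ((tnth (in_tuple B) c).1, rcons (tnth (in_tuple B) c).2 a))%:R).
End PathModule.

Definition regmod (L : nat) : qmod := pathmod L predT.
(* P_i = Lambda e_i : spanned by the nonzero paths starting at i *)
Definition projmod (L : nat) (i : Q0 Q) : qmod := pathmod L (fun p => p.1 == i).
(* R(b) = Lambda b : spanned by the nonzero paths whose first arrow is b *)
Definition Rmod (L : nat) (b : Q1 Q) : qmod :=
  pathmod L (fun p => if p.2 is a :: _ then a == b else false).

Definition gproj (L : nat) (N : qmod) : Prop :=
  exists (P : int -> qmod) (d : forall n : int, 'M[K]_(mdim (P (n + 1)), mdim (P n))),
    [/\ forall n, is_mod (P n) /\ projective (P n) /\ is_hom (d n),
        forall n : int, exact_at (d n) (d (n + 1)),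
        (* and stays exact under Hom(-, Lambda) *)
        (forall (n : int) (g : 'M[K]_(mdim (regmod L), mdim (P (n + 1)))),
          is_hom g -> g *m d n = 0 ->
          exists h : 'M[K]_(mdim (regmod L), mdim (P (n + 1 + 1))),
            is_hom h /\ g = h *m d (n + 1)) &
        (* N is isomorphic to Ker d^0 *)
        exists iota : 'M[K]_(mdim (P 0), mdim N),
          [/\ is_hom iota, inj_map iota & exact_at iota (d 0)]].
End Modules.

(* 1-Gorenstein: Lambda has injective dimension <= 1 as left module and as
   right module (= left module over the opposite algebra). *)
Definition one_gorenstein (K : fieldType) (Q : bquiver) (L : nat) : Prop :=
  injdim_le1 (regmod K Q L) /\ injdim_le1 (regmod K (opQ Q) L).

(* Components of Phi(N) = \hat N: \hat N_i = N_i and \hat N_alpha = Im N_alpha;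
   we record the subspaces (as column spaces) and their dimensions. *)
Definition hatN_vertex (K : fieldType) (Q : bquiver) (N : qmod K Q) (i : Q0 Q) :=
  me N i.
Definition hatN_arrow (K : fieldType) (Q : bquiver) (N : qmod K Q) (a : Q1 Q) :=
  ma N a.
Definition dim_hatN_vertex (K : fieldType) (Q : bquiver) (N : qmod K Q) (i : Q0 Q) :=
  \rank (hatN_vertex N i).
Definition dim_hatN_arrow (K : fieldType) (Q : bquiver) (N : qmod K Q) (a : Q1 Q) :=
  \rank (hatN_arrow N a).
Definition dim_vertex (K : fieldType) (Q : bquiver) (N : qmod K Q) (i : Q0 Q) :=
  \rank (me N i).

From HB Require Import structures.
From mathcomp Require Import all_boot all_order all_algebra.
Import Order.TTheory GRing.Theory Num.Theory.

(* A path module whose basis consists of the nonzero extensions [c0 w] of one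
   path [c0] is cyclic, so a homomorphism from it into [N] is determined by the
   image [x] of [c0]; [x] may be any vector of [N_(pend c0)] killed by every
   arrow [a] for which [c0 a] vanishes.  Hence [Hom(P_i, N) = N_i], and, since
   in a gentle algebra [a] is the only arrow with [a b] in [I],
   [Hom(R(b), N) = N_(s a) :&: ker N_a], and rank-nullity for [N_a] gives (ii). *)

Set Implicit Arguments.
Unset Strict Implicit.
Unset Printing Implicit Defensive.

Section PathBasis.
Variable Q : bquiver.

Lemma mem_words k w : (w \in words Q k) = (size w == k).
Proof.
elim: k w => [|k IH] [|a w] //=.
  by apply/negbTE/allpairsP => -[[x y] [_ _]].
apply/allpairsP/idP => [[[x y] [_ Hy [_ ->]]]|Hw]; first by rewrite /= eqSS -IH.
by exists (a, w); rewrite mem_enum IH.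
Qed.

Lemma uniq_words k : uniq (words Q k).
Proof.
elim: k => [|k IH] //=; apply: allpairs_uniq => //; first exact: enum_uniq.
by move=> [a1 w1] [a2 w2] _ _ /= [-> ->].
Qed.

Lemma mem_short_words L w :
  (w \in flatten [seq words Q k | k <- iota 0 L]) = (size w < L).
Proof.
apply/flattenP/idP => [[s /mapP[k Hk ->]]|Hw].
  by rewrite mem_words => /eqP->; rewrite mem_iota in Hk.
exists (words Q (size w)); last by rewrite mem_words.
by apply/mapP; exists (size w); rewrite // mem_iota.
Qed.

Lemma uniq_short_words L : uniq (flatten [seq words Q k | k <- iota 0 L]).
Proof.
elim: L => [|L IH] //.
rewrite -addn1 iotaD add0n map_cat flatten_cat cat_uniq IH /= cats0 uniq_words andbT.
by apply/hasPn => w; rewrite mem_words => /eqP <-; rewrite mem_short_words ltnn.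
Qed.

Lemma mem_plist L p : (p \in plist Q L) = nzpath p && (size p.2 < L).
Proof.
rewrite mem_filter; congr andb; apply/allpairsP/idP => [[[x y] [_ Hy ->]]|Hp].
  by rewrite -mem_short_words.
by exists p; rewrite mem_enum mem_short_words; case: p Hp.
Qed.

Lemma uniq_plist L : uniq (plist Q L).
Proof.
apply/filter_uniq/allpairs_uniq; [exact: enum_uniq | exact: uniq_short_words |].
by move=> [a1 w1] [a2 w2].
Qed.

Lemma nzpath_catl v s t : @nzpath Q (v, s ++ t) -> @nzpath Q (v, s).
Proof. by case: s => //= a s; rewrite /nzpath /= cat_path => /andP[-> /andP[-> _]]. Qed.

Lemma nzpath_rconsl v s a : @nzpath Q (v, rcons s a) -> @nzpath Q (v, s).
Proof. by rewrite -cats1 => /nzpath_catl. Qed.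

Lemma nzpath_rcons2 v s l a :
  @nzpath Q (v, rcons (rcons s l) a) = @nzpath Q (v, rcons s l) && nzstep l a.
Proof.
case: s => [|x s]; rewrite /nzpath /=; first by rewrite !andbT.
by rewrite rcons_path last_rcons andbA.
Qed.

Lemma fd_bound_size L (p : qpath Q) : fd_bound Q L -> nzpath p -> size p.2 < L.
Proof.
case: p => v w fd /= Hnz; rewrite ltnNge; apply/negP => Hle.
have := fd (v, take L w); rewrite /= size_takel // => /(_ erefl); apply/negP/negPn.
by apply: (@nzpath_catl _ _ (drop L w)); rewrite cat_take_drop.
Qed.

Lemma mem_pathbasis L (P : pred (qpath Q)) p : fd_bound Q L ->
  (p \in [seq p <- plist Q L | P p]) = P p && nzpath p.
Proof.
move=> fd; rewrite mem_filter mem_plist.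
by case Hp: (nzpath p); rewrite ?andbF // (fd_bound_size fd Hp).
Qed.

End PathBasis.

Local Open Scope ring_scope.

Section HomDefect.
Variables (K : fieldType) (m n : nat) (X : 'M[K]_m) (Y : 'M[K]_n).

Definition hom_defect (F : 'M[K]_(n, m)) := F *m X - Y *m F.

Fact hom_defect_linear : linear hom_defect.
Proof.
move=> a F G; rewrite /hom_defect mulmxDl mulmxDr -scalemxAl -scalemxAr scalerBr.
by rewrite addrACA opprD.
Qed.

HB.instance Definition _ :=
  GRing.isLinear.Build K _ _ _ hom_defect hom_defect_linear.

Lemma sub_kermx_hom_defect v :
  (v <= kermx (lin_mx (fun F : 'M[K]_(n, m) => F *m X - Y *m F)))%MS
    = (vec_mx v *m X == Y *m vec_mx v).
Proof. by rewrite sub_kermx (mul_rV_lin hom_defect) mxvec_eq0 subr_eq0. Qed.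

End HomDefect.

Lemma homspaceP (K : fieldType) (Q : bquiver) (M N : qmod K Q)
    (v : 'rV_(mdim N * mdim M)) :
  (v <= homspace M N)%MS <-> is_hom (vec_mx v).
Proof.
rewrite /homspace sub_capmx; split.
  case/andP => /sub_bigcapmxP Hi /sub_bigcapmxP Ha.
  by split=> [i|a]; apply/eqP; rewrite -sub_kermx_hom_defect; [apply: Hi | apply: Ha].
case=> Hi Ha; apply/andP; split; apply/sub_bigcapmxP => x _.
  by rewrite sub_kermx_hom_defect Hi.
by rewrite sub_kermx_hom_defect Ha.
Qed.

Lemma mxrank_injective_image (K : fieldType) p q k n
    (H : 'M[K]_(p, q)) (S : 'M[K]_(k, n)) (A : 'M[K]_(n, q)) :
  (forall u : 'rV_n, (u <= S)%MS -> (u *m A <= H)%MS) ->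
  (forall v : 'rV_q, (v <= H)%MS -> exists2 u : 'rV_n, (u <= S)%MS & v = u *m A) ->
  (forall u : 'rV_n, (u <= S)%MS -> u *m A = 0 -> u = 0) ->
  \rank H = \rank S.
Proof.
move=> SA_H H_SA injA.
have eqH : (S *m A == H)%MS.
  apply/andP; split; apply/row_subP => i.
    by rewrite row_mul; apply/SA_H/row_sub.
  have [u /submxP[w ->] ->] := H_SA _ (row_sub i H).
  by rewrite -mulmxA submxMl.
rewrite -(eqmxP eqH) -(mxrank_mul_ker S A).
suff -> : (S :&: kermx A)%MS = 0 by rewrite mxrank0 addn0.
apply/row_matrixP => i; rewrite row0.
have Hi := row_sub i (S :&: kermx A)%MS.
apply: injA; first exact: submx_trans Hi (capmxSl _ _).
by apply/sub_kermxP; apply: submx_trans Hi (capmxSr _ _).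
Qed.

Section ModuleFacts.
Variables (K : fieldType) (Q : bquiver) (N : qmod K Q).
Hypothesis HN : is_mod N.

Lemma me_tgt_ma a : me N (tgt a) *m ma N a = ma N a.
Proof. by case: HN => He _ Ha _; rewrite Ha !mulmxA He eqxx -!mulmxA. Qed.

Lemma ma_me_src a : ma N a *m me N (src a) = ma N a.
Proof. by case: HN => He _ Ha _; rewrite Ha -!mulmxA He eqxx. Qed.

Lemma ma_ma_zero a l : ~~ nzstep l a -> ma N a *m ma N l = 0.
Proof.
case: HN => He _ _ Hr; rewrite /nzstep negb_and negbK => /orP[Ht|]; last exact: Hr.
rewrite -(ma_me_src a) -(me_tgt_ma l) mulmxA -(mulmxA _ (me N (src a))) He.
by rewrite eq_sym (negbTE Ht) mulmx0 mul0mx.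
Qed.

Lemma tr_sub_me i (u : 'rV_(mdim N)) :
  (u <= (me N i)^T)%MS = (me N i *m u^T == u^T).
Proof.
case: HN => He _ _ _; apply/idP/eqP => [/submxP[w ->]|E].
  by rewrite trmx_mul trmxK mulmxA He eqxx.
by rewrite -[u]trmxK -E trmx_mul submxMl.
Qed.

Lemma ma_me_off_src i a (x : 'cV_(mdim N)) :
  me N i *m x = x -> src a != i -> ma N a *m x = 0.
Proof.
case: HN => He _ _ _ <- Hai.
by rewrite -(ma_me_src a) mulmxA -(mulmxA (ma N a)) He (negbTE Hai) mulmx0 mul0mx.
Qed.

Definition word_action (w : seq (Q1 Q)) : 'M[K]_(mdim N) :=
  foldl (fun X a => ma N a *m X) 1%:M w.

Lemma word_action_rcons w a : word_action (rcons w a) = ma N a *m word_action w.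
Proof. by rewrite /word_action foldl_rcons. Qed.

Lemma me_word_action v w (x : 'cV_(mdim N)) : me N v *m x = x ->
  me N (last v [seq tgt a | a <- w]) *m (word_action w *m x) = word_action w *m x.
Proof.
move=> Hx; elim/last_ind: w => [|w a _]; first by rewrite /word_action /= mul1mx.
by rewrite map_rcons last_rcons word_action_rcons !mulmxA me_tgt_ma.
Qed.

End ModuleFacts.

Section PathModuleHoms.
Variables (K : fieldType) (Q : bquiver) (L : nat) (P : pred (qpath Q)) (N : qmod K Q).
Hypothesis HN : is_mod N.
Variable c0 : qpath Q.

Local Notation B := [seq p <- plist Q L | P p].
Local Notation M := (pathmod K L P).
Local Notation tB c := (tnth (in_tuple [seq p <- plist Q L | P p]) c).

Definition ext_word (p : qpath Q) := drop (size c0.2) p.2.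

Definition admissible (x : 'cV[K]_(mdim N)) : Prop :=
  me N (pend c0) *m x = x /\
  forall a, ~~ nzpath (c0.1, rcons c0.2 a) -> ma N a *m x = 0.

(* Row [u] of [genmx] is the homomorphism sending the generator [c0] to [u^T]:
   the basis path [c0 ++ w] goes to [word_action N w *m u^T]. *)
Definition genmx : 'M[K]_(mdim N, mdim N * size B) :=
  \matrix_(k, j) (mxvec (\matrix_(r, c) word_action N (ext_word (tB c)) r k)) 0 j.

Lemma genmx_entry u r c :
  vec_mx (u *m genmx) r c = (word_action N (ext_word (tB c)) *m u^T) r 0.
Proof. by rewrite !mxE; apply: eq_bigr => k _; rewrite !mxE mxvecE mxE mulrC. Qed.

Lemma mulmx_genmx n (X : 'M_(n, mdim N)) u r c :
  (X *m vec_mx (u *m genmx)) r c = (X *m (word_action N (ext_word (tB c)) *m u^T)) r 0.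
Proof. by rewrite !mxE; apply: eq_bigr => j _; rewrite genmx_entry. Qed.

Lemma me_pathmod i r c : me M i r c = ((r == c) && (pend (tB c) == i))%:R.
Proof. by rewrite mxE. Qed.

Lemma ma_pathmod a r c : ma M a r c = (tB r == ((tB c).1, rcons (tB c).2 a))%:R.
Proof. by rewrite mxE. Qed.

Lemma eq_tnth_pathbasis c c' : (tB c == tB c') = (c == c').
Proof. by rewrite !(tnth_nth c0) /= nth_uniq // filter_uniq // uniq_plist. Qed.

Lemma tnth_pathbasis_mem c : tB c \in B.
Proof. exact: (mem_tnth c (in_tuple B)). Qed.

(* The basis consists of the nonzero extensions of [c0], so [M] is cyclic,
   generated by [c0]. *)
Hypothesis c0_in : c0 \in B.
Hypothesis B_ext : forall p, p \in B -> p = (c0.1, c0.2 ++ ext_word p).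
Hypothesis B_rcons : forall p a,
  p \in B -> nzpath (p.1, rcons p.2 a) -> (p.1, rcons p.2 a) \in B.
Hypothesis B_rconsl : forall w a,
  (c0.1, c0.2 ++ rcons w a) \in B -> (c0.1, c0.2 ++ w) \in B.

Lemma genmx_hom_vertex u i : me N (pend c0) *m u^T = u^T ->
  vec_mx (u *m genmx) *m me M i = me N i *m vec_mx (u *m genmx).
Proof.
move=> Hu; apply/matrixP => r c; rewrite mulmx_genmx.
set w := ext_word (tB c).
have Hwu := me_word_action HN w Hu.
have pend_c : pend (tB c) = last (pend c0) [seq tgt a | a <- w].
  by rewrite {1}(B_ext (tnth_pathbasis_mem c)) /pend /= map_cat last_cat.
rewrite -pend_c in Hwu.
rewrite mxE (bigD1 c) //= big1 => [|k /negbTE Hk]; last by rewrite me_pathmod Hk mulr0.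
rewrite me_pathmod eqxx addr0 genmx_entry -/w /=.
have [<-|ne] := eqVneq (pend (tB c)) i; first by rewrite mulr1 Hwu.
case: HN => He _ _ _.
by rewrite mulr0 -Hwu mulmxA He eq_sym (negbTE ne) mul0mx mxE.
Qed.

Lemma ma_word_action_dead (x : 'cV_(mdim N)) a w :
  (forall a, ~~ nzpath (c0.1, rcons c0.2 a) -> ma N a *m x = 0) ->
  nzpath (c0.1, c0.2 ++ w) -> ~~ nzpath (c0.1, rcons (c0.2 ++ w) a) ->
  ma N a *m (word_action N w *m x) = 0.
Proof.
move=> Hann; case/lastP: w => [|w l].
  by rewrite cats0 /word_action mul1mx => _ /Hann.
rewrite -rcons_cat nzpath_rcons2 => -> /= dead.
by rewrite word_action_rcons !mulmxA ma_ma_zero // !mul0mx.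
Qed.

Lemma genmx_hom_arrow u a : admissible u^T ->
  vec_mx (u *m genmx) *m ma M a = ma N a *m vec_mx (u *m genmx).
Proof.
case=> _ Hann; apply/matrixP => r c; rewrite mulmx_genmx mxE.
set p := tB c; have Bp : p \in B := tnth_pathbasis_mem c.
case Bpa : ((p.1, rcons p.2 a) \in B).
  have /(tnthP (in_tuple B)) [k0 Ek0] := Bpa.
  rewrite (bigD1 k0) //= big1 => [|k Hk]; last first.
    by rewrite ma_pathmod -/p Ek0 eq_tnth_pathbasis (negbTE Hk) mulr0.
  rewrite ma_pathmod -/p Ek0 eqxx mulr1 addr0 genmx_entry -Ek0 /ext_word /=.
  by rewrite {1}(B_ext Bp) /= rcons_cat drop_size_cat // word_action_rcons mulmxA.
rewrite big1 => [|k _]; last first.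
  rewrite ma_pathmod -/p; case: eqP; rewrite ?mulr0 // => Ek.
  by move: Bpa; rewrite -Ek tnth_pathbasis_mem.
have dead : ~~ nzpath (p.1, rcons p.2 a) by apply: contraFN Bpa; apply: B_rcons.
have nzp : nzpath (c0.1, c0.2 ++ ext_word p).
  by rewrite -(B_ext Bp); move: Bp; rewrite mem_filter mem_plist => /andP[_ /andP[]].
rewrite {1 2}(B_ext Bp) /= in dead.
by rewrite (ma_word_action_dead Hann nzp dead) mxE.
Qed.

Section HomFromGenerator.
Variables (F : 'M[K]_(mdim N, mdim M)) (i0 : 'I_(size B)).
Hypotheses (homF : is_hom F) (tB_i0 : tB i0 = c0).

Lemma hom_pathmod_entry c r :
  F r c = (word_action N (ext_word (tB c)) *m col i0 F) r 0.
Proof.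
case: homF => _ homFa; move: c r.
suff gen w c : tB c = (c0.1, c0.2 ++ w) ->
    forall r, F r c = (word_action N w *m col i0 F) r 0.
  by move=> c; apply/gen/B_ext/tnth_pathbasis_mem.
elim/last_ind: w c => [|w a IH] c Ec r.
  move: Ec; rewrite cats0 -surjective_pairing -tB_i0 => /eqP.
  by rewrite eq_tnth_pathbasis => /eqP ->; rewrite /word_action mul1mx mxE.
have := tnth_pathbasis_mem c; rewrite Ec => /B_rconsl /(tnthP (in_tuple B))[c' Ec'].
move/matrixP: (homFa a) => /(_ r c').
rewrite mxE (bigD1 c) //= big1 => [|k Hk]; last first.
  by rewrite ma_pathmod -Ec' /= rcons_cat -Ec eq_tnth_pathbasis (negbTE Hk) mulr0.
rewrite ma_pathmod -Ec' /= rcons_cat -Ec eqxx mulr1 addr0 => ->.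
rewrite word_action_rcons -mulmxA !mxE; apply: eq_bigr => j _.
by rewrite (IH c' (esym Ec')) mxE.
Qed.

Lemma hom_pathmod_admissible : admissible (col i0 F).
Proof.
case: homF => homFe homFa; split.
  apply/colP => r; move/matrixP: (homFe (pend c0)) => /(_ r i0).
  rewrite mxE (bigD1 i0) //= big1 => [|k Hk]; last first.
    by rewrite me_pathmod (negbTE Hk) mulr0.
  rewrite me_pathmod eqxx tB_i0 eqxx mulr1 addr0 => E.
  by rewrite [in RHS]mxE E !mxE; apply: eq_bigr => j _; rewrite mxE.
move=> a dead; apply/colP => r; move/matrixP: (homFa a) => /(_ r i0).
rewrite mxE big1 => [|k _]; last first.
  rewrite ma_pathmod tB_i0; case: eqP; rewrite ?mulr0 // => Ek.
  move: (tnth_pathbasis_mem k); rewrite Ek mem_filter mem_plist.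
  by rewrite (negbTE dead) andbF.
by move=> E; rewrite [RHS]mxE E !mxE; apply: eq_bigr => j _; rewrite mxE.
Qed.

End HomFromGenerator.

Lemma homdim_pathmod k (S : 'M[K]_(k, mdim N)) :
  (forall u : 'rV_(mdim N), (u <= S)%MS <-> admissible u^T) ->
  homdim M N = \rank S.
Proof.
move=> HS; have /(tnthP (in_tuple B)) [i0 tB_i0] := c0_in.
apply: (@mxrank_injective_image _ _ _ _ _ _ _ genmx).
- move=> u /HS adm; apply/homspaceP.
  by split=> [i|a]; [exact: genmx_hom_vertex adm.1 | exact: genmx_hom_arrow].
- move=> v /homspaceP homF; exists (col i0 (vec_mx v))^T.
    by apply/HS; rewrite trmxK; apply: hom_pathmod_admissible.
  apply: (can_inj vec_mxK); apply/matrixP => r c.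
  by rewrite genmx_entry trmxK (hom_pathmod_entry homF (esym tB_i0)).
- move=> u _ u0; apply: (can_inj (@trmxK _ _ _)); apply/colP => r.
  have := genmx_entry u r i0.
  by rewrite u0 -tB_i0 /ext_word drop_size /word_action mul1mx !mxE => <-.
Qed.

End PathModuleHoms.

Section HomIntoModule.
Variables (K : fieldType) (Q : bquiver) (L : nat) (N : qmod K Q).
Hypotheses (HN : is_mod N) (fd : fd_bound Q L).

Lemma homdim_projmod i : homdim (projmod K L i) N = dim_vertex N i.
Proof.
rewrite /dim_vertex -mxrank_tr.
apply: (@homdim_pathmod K Q L _ N HN (i, [::])).
- by rewrite mem_pathbasis //= eqxx.
- by move=> [v w]; rewrite mem_pathbasis //= /ext_word drop0 => /andP[/eqP -> _].
- by move=> p a; rewrite !mem_pathbasis //= => /andP[-> _].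
- by move=> w a; rewrite !mem_pathbasis //= => /andP[-> /nzpath_rconsl].
move=> u; rewrite tr_sub_me //; split=> [/eqP Hu|[Hu _]]; last exact/eqP.
by split=> // a; rewrite /nzpath /= andbT => /(ma_me_off_src HN Hu).
Qed.

Lemma homdim_Rmod b g :
  qrel g b -> tgt b = src g -> (forall g', qrel g' b -> g' = g) ->
  homdim (Rmod K L b) N = \rank ((me N (src g))^T :&: kermx (ma N g)^T)%MS.
Proof.
move=> gb tgt_b rel_b.
apply: (@homdim_pathmod K Q L _ N HN (src b, [:: b])).
- by rewrite mem_pathbasis //= eqxx /nzpath /= eqxx.
- move=> [v [|x t]]; rewrite mem_pathbasis //= => /andP[/eqP ->].
  by rewrite /nzpath /ext_word /= drop0 => /andP[/eqP -> _].
- by move=> [v [|x t]] a; rewrite !mem_pathbasis //= => /andP[-> _] ->.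
- by move=> w a; rewrite !mem_pathbasis //= eqxx => /(@nzpath_rconsl _ _ (b :: w)).
move=> u; rewrite sub_capmx tr_sub_me // sub_kermx -trmx_eq0 trmx_mul trmxK.
rewrite /admissible /pend /= tgt_b.
split=> [/andP[/eqP Hu /eqP Hg]|[-> Hann]]; last first.
  by rewrite eqxx Hann ?eqxx // /nzpath /= /nzstep gb /= !andbF.
split=> // a; rewrite /nzpath /= eqxx andbT /nzstep /= negb_and negbK.
case/orP=> [Ha|/rel_b -> //].
by apply: (ma_me_off_src HN Hu); rewrite -tgt_b eq_sym.
Qed.

End HomIntoModule.

Lemma dim_vertex_src_rank (K : fieldType) (Q : bquiver) (N : qmod K Q) a : is_mod N ->
  dim_vertex N (src a)
    = (\rank (ma N a) + \rank ((me N (src a))^T :&: kermx (ma N a)^T))%N.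
Proof.
move=> HN; rewrite /dim_vertex -mxrank_tr -(mxrank_mul_ker _ (ma N a)^T).
by rewrite -trmx_mul ma_me_src // mxrank_tr.
Qed.

Theorem lemma4p2 (K : closedFieldType) (Q : bquiver) (L : nat)
  (Hgentle : gentle Q L) (HGor : one_gorenstein K Q L)
  (N : qmod K Q) (HN : is_mod N) (HGP : gproj L N) :
  (forall i : Q0 Q,
     dim_hatN_vertex N i = dim_vertex N i /\
     dim_vertex N i = homdim (projmod K L i) N) /\
  (forall a b : Q1 Q, @cyc_arrow Q a -> qrel a b ->
     (dim_hatN_arrow N a : int) =
       (homdim (projmod K L (src a)) N : int) - (homdim (Rmod K L b) N : int)).
Proof.
case: Hgentle => rel_tgt _ local fd.
split=> [i|a b _ ab]; first by rewrite homdim_projmod.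
have rel_b g : qrel g b -> g = a.
  by case: (local b) => _ _ _ /card_le1_eqP uniq_g gb; apply: uniq_g.
rewrite homdim_projmod // (homdim_Rmod HN fd ab (rel_tgt _ _ ab) rel_b).
by rewrite dim_vertex_src_rank // PoszD addrK.
Qed.
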